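(* Let $X\in\mathbb{Z}^{d\times N}$ be a matrix of full rank $d$ in $B$-basic form, $X=(B\,|\,A)$ with $B\in\mathbb{Z}^{d\times d}$ a diagonal matrix of full rank with non-negative entries and $A\in\mathbb{Z}^{d\times(N-d)}$ (columns indexed by $d+1,\dots,N$). Then, up to sign, every non-zero subdeterminant of $A$ is determined by the arithmetic matroid $\mathcal{A}(X)$: precisely, if $X'=(B'\,|\,A')\in\mathbb{Z}^{d\times N}$ is also in $B$-basic form (with $B'$ diagonal of full rank with non-negative entries) and represents the same arithmetic matroid as $X$, then for all $I\subseteq[d]$ and $J\subseteq\{d+1,\dots,N\}$ with $|I|=|J|$ such that the submatrix $A_{I,J}$ of $A$ with rows $I$ and columns $J$ has $\det(A_{I,J})\neq 0$, we have $|\det(A_{I,J})|=|\det(A'_{I,J})|$.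
   Context: The arithmetic matroid $\mathcal{A}(X)$ represented by $X\in\mathbb{Z}^{d\times N}$ with columns $x_1,\dots,x_N$ is $([N],\operatorname{rk},m)$ where $\operatorname{rk}(S)$ is the dimension of the real span $\langle S\rangle_{\mathbb{R}}$ of $\{x_e:e\in S\}$ and $m(S)=|(\langle S\rangle_{\mathbb{R}}\cap\mathbb{Z}^d)/\langle S\rangle|$, with $\langle S\rangle$ the subgroup of $\mathbb{Z}^d$ generated by $\{x_e:e\in S\}$. *)

From HB Require Import structures.
From mathcomp Require Import all_boot all_order all_algebra.
Set Implicit Arguments. Unset Strict Implicit. Unset Printing Implicit Defensive.
Import Order.TTheory GRing.Theory Num.Theory.
Local Open Scope ring_scope.

(* Integer matrices X : 'M[int]_(d, N); columns indexed by 'I_N.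
   Real spans of integer vectors are computed over rat (same dimension,
   same integer points). *)

Definition ratmx (m n : nat) (M : 'M[int]_(m, n)) : 'M[rat]_(m, n) :=
  map_mx (fun z : int => z%:~R) M.

(* rk(S) = dimension of the span of the columns x_e, e in S
   (columns outside S replaced by 0). *)
Definition mat_rk (d N : nat) (X : 'M[int]_(d, N)) (S : {set 'I_N}) : nat :=
  \rank (ratmx X *m diag_mx (\row_(j < N) (if j \in S then 1 else 0 : rat))).

Definition in_span (d N : nat) (X : 'M[int]_(d, N)) (S : {set 'I_N})
  (x : 'cV[int]_d) : Prop :=
  exists c : 'cV[rat]_N, (forall j, j \notin S -> c j 0 = 0) /\
    ratmx x = ratmx X *m c.

Definition in_lattice (d N : nat) (X : 'M[int]_(d, N)) (S : {set 'I_N})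
  (x : 'cV[int]_d) : Prop :=
  exists c : 'cV[int]_N, (forall j, j \notin S -> c j 0 = 0) /\ x = X *m c.

(* is_mult X S m : the group (<S>_R ∩ Z^d) / <S> has exactly m elements,
   i.e. there are m representatives of pairwise distinct cosets covering all. *)
Definition is_mult (d N : nat) (X : 'M[int]_(d, N)) (S : {set 'I_N}) (m : nat)
  : Prop :=
  exists reps : 'I_m -> 'cV[int]_d,
    (forall i, in_span X S (reps i)) /\
    (forall i j, in_lattice X S (reps i - reps j) -> i = j) /\
    (forall x, in_span X S x -> exists i, in_lattice X S (x - reps i)).

Definition same_arith_matroid (d N : nat) (X X' : 'M[int]_(d, N)) : Prop :=
  forall S : {set 'I_N}, mat_rk X S = mat_rk X' S /\
    (forall m, is_mult X S m <-> is_mult X' S m).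

Definition basic_diag (d : nat) (B : 'M[int]_d) : Prop :=
  is_diag_mx B /\ (forall i, 0 <= B i i) /\ \rank (ratmx B) = d.

From HB Require Import structures.
From mathcomp Require Import all_boot all_order all_algebra all_fingroup.
From mathcomp Require Import zify.
From Stdlib Require Import ClassicalEpsilon.
Import Order.TTheory GRing.Theory Num.Theory.
Local Open Scope ring_scope.
Set Implicit Arguments. Unset Strict Implicit.

(* Let I and J be the row and column sets of the minor, T the rows outside I,
   S1 the columns of B indexed by T and S2 = S1 + J.  The lattice spanned by S1
   is the diagonal sublattice (B_tt Z)_(t in T) of Z^T, so
   m(S1) = prod_(t in T) |B_tt|.  After permuting rows, the columns S2 form a
   block lower triangular matrix with diagonal blocks A_IJ and diag(B_tt);
   S2 is therefore a basis and m(S2) = |det| = |det A_IJ| * m(S1).  Both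
   multiplicities and the rank of S2 are matroid data, so |det A_IJ| is the
   same for X and X'. *)

Definition has_index m (P Q : 'cV[int]_m -> Prop) (k : nat) : Prop :=
  exists reps : 'I_k -> 'cV[int]_m,
    (forall i, P (reps i)) /\
    (forall i j, Q (reps i - reps j) -> i = j) /\
    (forall x, P x -> exists i, Q (x - reps i)).

Section Index.

Variable m : nat.
Implicit Types P Q : 'cV[int]_m -> Prop.

Lemma has_index_leq P Q k1 k2 : (forall x y, Q x -> Q y -> Q (x - y)) ->
  has_index P Q k1 -> has_index P Q k2 -> (k1 <= k2)%N.
Proof.
move=> subQ [r1 [P1 [sep1 _]]] [r2 [_ [_ cover2]]].
have near i : {j | Q (r1 i - r2 j)}.
  exact/constructive_indefinite_description/cover2/P1.
suff /leq_card : injective (fun i => sval (near i)) by rewrite !card_ord.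
move=> i i' /= eq_near; apply: sep1.
have := subQ _ _ (svalP (near i)) (svalP (near i')).
by rewrite eq_near opprB addrA subrK.
Qed.

Lemma has_index_unique P Q k1 k2 : (forall x y, Q x -> Q y -> Q (x - y)) ->
  has_index P Q k1 -> has_index P Q k2 -> k1 = k2.
Proof.
move=> subQ h1 h2; apply/eqP; rewrite eqn_leq.
by rewrite (has_index_leq subQ h1 h2) (has_index_leq subQ h2 h1).
Qed.

Lemma eq_has_index P Q P' Q' k : (forall x, P x <-> P' x) ->
  (forall x, Q x <-> Q' x) -> has_index P Q k -> has_index P' Q' k.
Proof.
move=> eP eQ [r [Pr [sep cover]]]; exists r; split; [|split].
- by move=> i; apply/eP.
- by move=> i j /eQ /sep.
- by move=> x /eP /cover [i /eQ]; exists i.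
Qed.

Lemma has_index_card (I : finType) P Q (reps : I -> 'cV[int]_m) :
  (forall i, P (reps i)) -> (forall i j, Q (reps i - reps j) -> i = j) ->
  (forall x, P x -> exists i, Q (x - reps i)) -> has_index P Q #|I|.
Proof.
move=> Pr sep cover; exists (fun i => reps (enum_val i)); split; [|split].
- by move=> i; apply: Pr.
- by move=> i j /sep /enum_val_inj.
- by move=> x /cover [i Qi]; exists (enum_rank i); rewrite enum_rankK.
Qed.

Lemma has_index_mulmx P Q k (U : 'M[int]_m) : U \in unitmx -> has_index P Q k ->
  has_index (fun x => P (invmx U *m x)) (fun x => Q (invmx U *m x)) k.
Proof.
move=> Uu [r [Pr [sep cover]]]; exists (fun i => U *m r i); split; [|split].
- by move=> i; rewrite mulKmx.
- by move=> i j; rewrite -mulmxBr mulKmx // => /sep.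
- by move=> x /cover [i Qi]; exists i; rewrite mulmxBr mulKmx.
Qed.

End Index.

Lemma eqn_of_dvdz (a b c : nat) : (a < c)%N -> (b < c)%N ->
  (c%:Z %| a%:Z - b%:Z)%Z -> a = b.
Proof.
move=> ac bc; rewrite -eqz_mod_dvd !modz_nat (modn_small ac) (modn_small bc).
by move/eqP => [].
Qed.

Lemma has_index_diag m (T : {set 'I_m}) (c : 'I_m -> nat) :
  (forall i, 0 < c i)%N ->
  has_index (fun x : 'cV[int]_m => forall i, i \notin T -> x i 0 = 0)
    (fun x => (forall i, i \notin T -> x i 0 = 0) /\
              (forall i, i \in T -> ((c i)%:Z %| (x i 0)%R)%Z))
    (\prod_(i in T) c i).
Proof.
move=> c_gt0.
(* Representatives are the residue vectors: mod c i on T, and 0 off T. *)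
pose C i := if i \in T then c i else 1%N.
have C_gt0 i : 0 < (C i)%:Z by rewrite ltz_nat /C; case: ifP.
have C_out i : i \notin T -> C i = 1%N by rewrite /C => /negbTE ->.
have C_in i : i \in T -> C i = c i by rewrite /C => ->.
have -> : (\prod_(i in T) c i = #|{dffun forall i, 'I_(C i)}|)%N.
  rewrite card_dep_ffun foldrE big_map big_enum big_mkcond /=.
  by apply: eq_bigr => i _; rewrite card_ord.
have rep0 (phi : {dffun forall i, 'I_(C i)}) i : i \notin T -> (phi i : nat) = 0%N.
  by move=> iT; have := ltn_ord (phi i); have := C_out i iT; lia.
apply: (has_index_card (reps := fun phi : {dffun forall i, 'I_(C i)} =>
  \col_i (phi i : nat)%:Z)).
- by move=> phi i iT; rewrite mxE rep0.
- move=> phi psi [_ dvd]; apply/ffunP => i; apply/val_inj => /=.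
  have [iT|iT] := boolP (i \in T); last by rewrite !rep0.
  apply: (@eqn_of_dvdz _ _ (c i)); try by rewrite -(C_in i iT).
  by have := dvd i iT; rewrite !mxE.
- move=> x Px.
  have rem_lt i : (`|modz (x i 0)%R (C i)|%N < C i)%N.
    have := ltz_pmod (x i 0) (C_gt0 i).
    have := modz_ge0 (x i 0) (lt0r_neq0 (C_gt0 i)).
    lia.
  pose phi : {dffun forall i, 'I_(C i)} := [ffun i => Ordinal (rem_lt i)].
  exists phi; split=> i iT; rewrite !mxE ffunE /=.
    by rewrite Px // mod0z subr0.
  rewrite -(C_in i iT) abszE ger0_norm ?modz_ge0 ?lt0r_neq0 //.
  by rewrite {1}(divz_eq (x i 0) (C i)) addrK dvdz_mull.
Qed.

Lemma has_index_det m (M : 'M[int]_m) : \det M != 0 ->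
  has_index (fun _ => True) (fun x => exists c, x = M *m c) `|\det M|%N.
Proof.
move=> detM_neq0.
(* The Smith normal form reduces the index computation to the diagonal case. *)
have [L L_unit [R R_unit [s _ defM]]] := int_Smith_normal_form M.
have {}defM : M = L *m diag_mx (\row_i s`_i) *m R.
  by rewrite defM; congr (_ *m _ *m _); apply/matrixP => i j; rewrite !mxE.
have unit_absz (U : 'M[int]_m) : U \in unitmx -> `|\det U|%N = 1%N.
  by rewrite unitmxE => /orP [] /eqP ->.
have detM : `|\det M|%N = (\prod_(i in [set: 'I_m]) `|(s`_i)%R|%N)%N.
  rewrite defM !det_mulmx !abszM (unit_absz L) // (unit_absz R) // mul1n muln1 det_diag.
  rewrite (big_morph absz abszM (erefl _)).
  by apply: eq_big => [i|i _]; rewrite ?inE ?mxE.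
have s_gt0 (i : 'I_m) : (0 < `|(s`_i)%R|)%N.
  rewrite absz_gt0; apply: contraNneq detM_neq0 => si0.
  by rewrite defM !det_mulmx det_diag (bigD1 i) //= mxE si0 !(mul0r, mulr0).
rewrite detM; have := has_index_mulmx L_unit (has_index_diag setT s_gt0).
apply: eq_has_index => x; first by split => // _ i; rewrite inE.
split.
- move=> [_ dvd].
  exists (invmx R *m \col_i (((invmx L *m x) i 0)%R %/ (s`_i)%R)%Z).
  rewrite defM -!mulmxA (mulKVmx R_unit) mul_diag_mx.
  rewrite -[X in X = _](mulKVmx L_unit x); congr (_ *m _).
  apply/matrixP => i j; rewrite !mxE (ord1 j) mulrC divzK //.
  by have := dvd i (in_setT i); rewrite !dvdzE mxE.
- move=> [c ->]; split => [i|i _]; first by rewrite inE.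
  rewrite defM -!mulmxA (mulKmx L_unit) mul_diag_mx mxE !dvdzE /=.
  by rewrite mxE abszM dvdn_mulr.
Qed.

Section ColumnSelection.

Variables (R : pzRingType) (k N : nat) (h : 'I_k -> 'I_N).

Lemma colsubE m (A : 'M[R]_(m, N)) : colsub h A = A *m colsub h 1%:M.
Proof. by rewrite mulmx_colsub mulmx1. Qed.

Lemma colsub1_mul_supp (c : 'cV[R]_k) j :
  j \notin [set h i | i in 'I_k] -> (colsub h 1%:M *m c) j 0 = 0.
Proof.
move=> jNh; rewrite !mxE big1 // => i _; rewrite !mxE.
by case: eqP => [ji|]; [move: jNh; rewrite ji imset_f | rewrite mul0r].
Qed.

Hypothesis h_inj : injective h.

Lemma colsub1_mul_imset (c : 'cV[R]_k) i : (colsub h 1%:M *m c) (h i) 0 = c i 0.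
Proof.
rewrite !mxE (bigD1 i) //= !mxE eqxx mul1r big1 ?addr0 // => i' i'i.
by rewrite !mxE (inj_eq h_inj) eq_sym (negbTE i'i) mul0r.
Qed.

Lemma colsub1_mul_rowsub (c : 'cV[R]_N) :
  (forall j, j \notin [set h i | i in 'I_k] -> c j 0 = 0) ->
  colsub h 1%:M *m rowsub h c = c.
Proof.
move=> c_supp; apply/matrixP => j z; rewrite (ord1 z).
have [/imsetP [i _ ->]|jNh] := boolP (j \in [set h i | i in 'I_k]); last first.
  by rewrite c_supp // -(colsub1_mul_supp (rowsub h c) jNh).
by rewrite colsub1_mul_imset mxE.
Qed.

Lemma mulmx_colsub_rowsub m (A : 'M[R]_(m, N)) (c : 'cV[R]_N) :
  (forall j, j \notin [set h i | i in 'I_k] -> c j 0 = 0) ->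
  A *m c = colsub h A *m rowsub h c.
Proof. by move=> /colsub1_mul_rowsub {1}<-; rewrite mulmxA -colsubE. Qed.

Lemma tr_colsub1_mul : (colsub h 1%:M)^T *m colsub h 1%:M = 1%:M :> 'M[R]_k.
Proof.
rewrite trmx_mxsub trmx1 -mxsub_mul mulmx1.
by apply/matrixP => i i'; rewrite !mxE (inj_eq h_inj).
Qed.

Lemma colsub1_mul_tr : colsub h 1%:M *m (colsub h 1%:M)^T =
  diag_mx (\row_j (if j \in [set h i | i in 'I_k] then 1 else 0)) :> 'M[R]_N.
Proof.
apply/matrixP => j j'; rewrite !mxE.
have [/imsetP [i _ ->]|jNh] := boolP (j \in [set h i | i in 'I_k]); last first.
  rewrite mul0rn big1 // => i _; rewrite !mxE.
  by case: eqP => [ji|]; [move: jNh; rewrite ji imset_f | rewrite mul0r].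
rewrite (bigD1 i) //= !mxE eqxx mul1r big1 ?addr0 => [|i' i'i].
  by rewrite eq_sym.
by rewrite !mxE (inj_eq h_inj) eq_sym (negbTE i'i) mul0r.
Qed.

End ColumnSelection.

Definition join_ord k r m (f : 'I_k -> 'I_m) (g : 'I_r -> 'I_m) (a : 'I_(k + r)) :=
  match split a with inl a1 => f a1 | inr a2 => g a2 end.

Lemma join_ord_lshift k r m (f : 'I_k -> 'I_m) (g : 'I_r -> 'I_m) a :
  join_ord f g (lshift r a) = f a.
Proof. by rewrite /join_ord (unsplitK (inl a)). Qed.

Lemma join_ord_rshift k r m (f : 'I_k -> 'I_m) (g : 'I_r -> 'I_m) b :
  join_ord f g (rshift k b) = g b.
Proof. by rewrite /join_ord (unsplitK (inr b)). Qed.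

Lemma join_ord_inj k r m (f : 'I_k -> 'I_m) (g : 'I_r -> 'I_m) :
  injective f -> injective g -> (forall a b, f a != g b) -> injective (join_ord f g).
Proof.
move=> f_inj g_inj fg_neq x y; rewrite -(splitK x) -(splitK y).
case: (split x) => a; case: (split y) => b /=;
  rewrite ?join_ord_lshift ?join_ord_rshift.
- by move=> /f_inj ->.
- by move=> eq_ab; have := fg_neq a b; rewrite eq_ab eqxx.
- by move=> eq_ab; have := fg_neq b a; rewrite eq_ab eqxx.
- by move=> /g_inj ->.
Qed.

Section JoinSub.

Variables (R : Type) (k r m n : nat) (f : 'I_k -> 'I_m) (g : 'I_r -> 'I_m).

Lemma colsub_join (M : 'M[R]_(n, m)) :
  colsub (join_ord f g) M = row_mx (colsub f M) (colsub g M).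
Proof. by apply/matrixP => i j; rewrite !mxE /join_ord; case: split => b; rewrite mxE. Qed.

Lemma rowsub_join (M : 'M[R]_(m, n)) :
  rowsub (join_ord f g) M = col_mx (rowsub f M) (rowsub g M).
Proof. by apply/matrixP => i j; rewrite !mxE /join_ord; case: split => a; rewrite mxE. Qed.

End JoinSub.

Lemma rowsub_row_mx (R : Type) m m' n1 n2 (f : 'I_m' -> 'I_m)
    (M1 : 'M[R]_(m, n1)) (M2 : 'M[R]_(m, n2)) :
  rowsub f (row_mx M1 M2) = row_mx (rowsub f M1) (rowsub f M2).
Proof.
by apply/matrixP => i j; rewrite !mxE; case: split => b; rewrite mxE.
Qed.

Lemma colsub_row_mxl (R : Type) m n1 n2 k (g : 'I_k -> 'I_n1)
    (M1 : 'M[R]_(m, n1)) (M2 : 'M[R]_(m, n2)) :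
  colsub (fun b => lshift n2 (g b)) (row_mx M1 M2) = colsub g M1.
Proof. by apply/matrixP => i b; rewrite [LHS]mxE row_mxEl mxE. Qed.

Lemma colsub_row_mxr (R : Type) m n1 n2 k (g : 'I_k -> 'I_n2)
    (M1 : 'M[R]_(m, n1)) (M2 : 'M[R]_(m, n2)) :
  colsub (fun b => rshift n1 (g b)) (row_mx M1 M2) = colsub g M2.
Proof. by apply/matrixP => i b; rewrite [LHS]mxE row_mxEr mxE. Qed.

Section DiagSub.

Variables (R : pzSemiRingType) (m k r : nat) (beta : 'rV[R]_m).

Lemma mxsub_diag_mx0 (f : 'I_k -> 'I_m) (g : 'I_r -> 'I_m) :
  (forall a b, f a != g b) -> mxsub f g (diag_mx beta) = 0.
Proof. by move=> fg_neq; apply/matrixP => a b; rewrite !mxE (negbTE (fg_neq a b)). Qed.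

Lemma mxsub_diag_mx (t : 'I_k -> 'I_m) : injective t ->
  mxsub t t (diag_mx beta) = diag_mx (\row_b beta 0 (t b)).
Proof. by move=> t_inj; apply/matrixP => a b; rewrite !mxE (inj_eq t_inj). Qed.

End DiagSub.

Lemma ord_complement k r (f : 'I_k -> 'I_(k + r)) : injective f ->
  exists2 t : 'I_r -> 'I_(k + r), injective t & forall a b, f a != t b.
Proof.
move=> f_inj; set T := ~: [set f a | a in 'I_k].
have cardT : #|T| = r.
  by apply/eqP; rewrite -(eqn_add2l k) -{1}(card_ord k) -(card_imset _ f_inj) cardsC card_ord.
exists (fun b => enum_val (cast_ord (esym cardT) b)).
  by move=> b b' /enum_val_inj /cast_ord_inj.
move=> a b; have := enum_valP (cast_ord (esym cardT) b).
by rewrite inE; apply: contraNneq => <-; apply: imset_f.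
Qed.

Lemma absz_det_rowsub n (s : 'I_n -> 'I_n) (M : 'M[int]_n) : injective s ->
  `|\det (rowsub s M)|%N = `|\det M|%N.
Proof.
move=> s_inj; rewrite (@eq_rowsub _ _ _ _ s (perm s_inj)) => [|i]; last by rewrite permE.
by rewrite -row_permEsub row_permE det_mulmx det_perm abszMsign.
Qed.

Lemma absz_det_basic k r n (beta : 'rV[int]_(k + r)) (A : 'M[int]_(k + r, n))
    (f : 'I_k -> 'I_(k + r)) (g : 'I_k -> 'I_n) (t : 'I_r -> 'I_(k + r)) :
  injective f -> injective t -> (forall a b, f a != t b) ->
  `|\det (colsub (join_ord (fun a => rshift (k + r) (g a)) (fun b => lshift n (t b)))
            (row_mx (diag_mx beta) A))|%N =
    (`|\det (mxsub f g A)|%N * \prod_b `|(beta 0 (t b))%R|)%N.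
Proof.
move=> f_inj t_inj ft_neq.
rewrite -(absz_det_rowsub _ (join_ord_inj f_inj t_inj ft_neq)).
rewrite colsub_join colsub_row_mxr colsub_row_mxl rowsub_join !rowsub_row_mx.
rewrite -!mxsubrc (mxsub_diag_mx0 _ ft_neq) (mxsub_diag_mx _ t_inj) -block_mxEv.
rewrite det_lblock abszM det_diag (big_morph absz abszM (erefl _)).
by congr (_ * _)%N; apply: eq_bigr => b _; rewrite mxE.
Qed.

Lemma homo_ltn_inj k m (f : 'I_k -> 'I_m) :
  {homo f : x y / (x < y)%N >-> (x < y)%N} -> injective f.
Proof.
move=> f_homo x y fxy; apply/val_inj/eqP; case: ltngtP => // [/f_homo|/f_homo];
  by rewrite fxy ltnn.
Qed.

Lemma ratmx_mxsub m n m' n' (f : 'I_m' -> 'I_m) (g : 'I_n' -> 'I_n)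
    (M : 'M[int]_(m, n)) : ratmx (mxsub f g M) = mxsub f g (ratmx M).
Proof. exact: map_mxsub. Qed.

Lemma unitmx_ratmx n (M : 'M[int]_n) : (ratmx M \in unitmx) = (\det M != 0).
Proof. by rewrite unitmxE unitfE det_map_mx intr_eq0. Qed.

Lemma basic_diagE d (B : 'M[int]_d) : basic_diag B ->
  exists2 beta : 'rV[int]_d, B = diag_mx beta & forall i, beta 0 i != 0.
Proof.
move=> [/diag_mxP [beta ->] [_ rkB]]; exists beta => // i.
have : ratmx (diag_mx beta) \in unitmx by rewrite -row_free_unit /row_free rkB.
rewrite unitmx_ratmx; apply: contraNneq => beta_i0.
by rewrite det_diag (bigD1 i) //= beta_i0 mul0r.
Qed.

Lemma in_lattice_sub d N (X : 'M[int]_(d, N)) S x y :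
  in_lattice X S x -> in_lattice X S y -> in_lattice X S (x - y).
Proof.
move=> [c [c_supp ->]] [c' [c'_supp ->]]; exists (c - c'); split.
  by move=> j jNS; rewrite !mxE c_supp // c'_supp // subr0.
by rewrite mulmxBr.
Qed.

Section ColumnSubsets.

Variables (d N k : nat) (X : 'M[int]_(d, N)) (h : 'I_k -> 'I_N).
Hypothesis h_inj : injective h.

Lemma in_lattice_imset x :
  in_lattice X [set h i | i in 'I_k] x <-> exists c, x = colsub h X *m c.
Proof.
split=> [[c [c_supp ->]]|[c ->]]; first by exists (rowsub h c); apply: mulmx_colsub_rowsub.
exists (colsub h 1%:M *m c); split; first exact: colsub1_mul_supp.
by rewrite mulmxA -colsubE.
Qed.

Lemma in_span_imset x : in_span X [set h i | i in 'I_k] x <->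
  exists c, ratmx x = colsub h (ratmx X) *m c.
Proof.
split=> [[c [c_supp ->]]|[c eq_x]]; first by exists (rowsub h c); apply: mulmx_colsub_rowsub.
exists (colsub h 1%:M *m c); split; first exact: colsub1_mul_supp.
by rewrite eq_x mulmxA -colsubE.
Qed.

Lemma mat_rk_imset : mat_rk X [set h i | i in 'I_k] = \rank (colsub h (ratmx X)).
Proof.
rewrite /mat_rk -colsub1_mul_tr // mulmxA -colsubE.
apply/eqP; rewrite eqn_leq mxrankM_maxl /=.
by rewrite -{1}[colsub h _]mulmx1 -(tr_colsub1_mul _ h_inj) mulmxA mxrankM_maxl.
Qed.

End ColumnSubsets.

Lemma mat_rk_basis d N (X : 'M[int]_(d, N)) (h : 'I_d -> 'I_N) : injective h ->
  (mat_rk X [set h i | i in 'I_d] == d) = (\det (colsub h X) != 0).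
Proof.
move=> h_inj; rewrite mat_rk_imset // -ratmx_mxsub.
by rewrite -[_ == d]/(row_free _) row_free_unit unitmx_ratmx.
Qed.

Lemma is_mult_basis d N (X : 'M[int]_(d, N)) (h : 'I_d -> 'I_N) : injective h ->
  \det (colsub h X) != 0 -> is_mult X [set h i | i in 'I_d] `|\det (colsub h X)|%N.
Proof.
move=> h_inj detX; apply: eq_has_index (has_index_det detX) => x.
  rewrite in_span_imset //; split=> // _.
  exists (invmx (ratmx (colsub h X)) *m ratmx x).
  by rewrite -ratmx_mxsub mulKVmx ?unitmx_ratmx.
by rewrite in_lattice_imset.
Qed.

Lemma diag_mx_mulE (R : pzSemiRingType) m (gamma : 'rV[R]_m) (v : 'cV[R]_m) i :
  (diag_mx gamma *m v) i 0 = gamma 0 i * v i 0.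
Proof. by rewrite mul_diag_mx mxE. Qed.

Section DiagonalColumns.

Variables (m n r : nat) (beta : 'rV[int]_m) (A : 'M[int]_(m, n)) (t : 'I_r -> 'I_m).
Hypotheses (beta_neq0 : forall i, beta 0 i != 0) (t_inj : injective t).

Let lt_inj : injective (fun b => lshift n (t b)).
Proof. by move=> b b' /lshift_inj /t_inj. Qed.

Let colsub_diag : colsub (fun b => lshift n (t b)) (row_mx (diag_mx beta) A) =
  diag_mx beta *m colsub t 1%:M.
Proof. by rewrite -colsubE; apply/matrixP => i b; rewrite [LHS]mxE row_mxEl !mxE. Qed.

Lemma in_span_diag_cols x :
  in_span (row_mx (diag_mx beta) A) [set lshift n (t b) | b in 'I_r] x <->
  forall i, i \notin [set t b | b in 'I_r] -> x i 0 = 0.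
Proof.
rewrite (in_span_imset _ lt_inj) -ratmx_mxsub colsub_diag.
rewrite /ratmx map_mxM map_diag_mx map_mxsub map_mx1.
split=> [[c eq_x] i iNt|x_supp].
  have := congr1 (fun y : 'cV[rat]_m => y i 0) eq_x.
  rewrite /= -mulmxA diag_mx_mulE colsub1_mul_supp // mulr0 mxE.
  by move=> /eqP; rewrite intr_eq0 => /eqP.
exists (\col_b ((x (t b) 0)%:~R / (beta 0 (t b))%:~R)).
apply/matrixP => i z; rewrite (ord1 z) -mulmxA diag_mx_mulE mxE.
have [/imsetP [b _ ->]|iNt] := boolP (i \in [set t b | b in 'I_r]).
  by rewrite colsub1_mul_imset // !mxE mulrC divfK // intr_eq0.
by rewrite colsub1_mul_supp // mulr0 x_supp.
Qed.

Lemma in_lattice_diag_cols x :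
  in_lattice (row_mx (diag_mx beta) A) [set lshift n (t b) | b in 'I_r] x <->
  (forall i, i \notin [set t b | b in 'I_r] -> x i 0 = 0) /\
  (forall i, i \in [set t b | b in 'I_r] -> ((beta 0 i)%R %| (x i 0)%R)%Z).
Proof.
rewrite (in_lattice_imset _ lt_inj) colsub_diag.
split=> [[c ->]|[x_supp x_dvd]].
  split=> [i iNt|_ /imsetP [b _ ->]]; rewrite -mulmxA diag_mx_mulE.
    by rewrite colsub1_mul_supp // mulr0.
  by rewrite dvdz_mulr.
exists (\col_b ((x (t b) 0)%R %/ (beta 0 (t b))%R)%Z).
apply/matrixP => i z; rewrite (ord1 z) -mulmxA diag_mx_mulE.
have [/imsetP [b _ ->]|iNt] := boolP (i \in [set t b | b in 'I_r]).
  by rewrite colsub1_mul_imset // mxE mulrC divzK // x_dvd // imset_f.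
by rewrite colsub1_mul_supp // mulr0 x_supp.
Qed.

Lemma is_mult_diag_cols :
  is_mult (row_mx (diag_mx beta) A) [set lshift n (t b) | b in 'I_r]
    (\prod_b `|(beta 0 (t b))%R|)%N.
Proof.
have beta_gt0 i : (0 < `|(beta 0 i)%R|)%N by rewrite absz_gt0.
rewrite -(big_imset (fun i => `|(beta 0 i)%R|%N) (in2W t_inj)) /=.
apply: eq_has_index (has_index_diag _ beta_gt0) => x.
  exact: iff_sym (in_span_diag_cols x).
split=> [[x_supp x_dvd]|/in_lattice_diag_cols [x_supp x_dvd]].
  by apply/in_lattice_diag_cols; split=> // i /x_dvd; rewrite !dvdzE.
by split=> // i /x_dvd; rewrite !dvdzE.
Qed.

End DiagonalColumns.

Unset Implicit Arguments.

Theorem lemma3p4 (d n : nat) (B B' : 'M[int]_d) (A A' : 'M[int]_(d, n)) :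
  basic_diag B -> basic_diag B' ->
  \rank (ratmx (row_mx B A)) = d ->
  \rank (ratmx (row_mx B' A')) = d ->
  same_arith_matroid (row_mx B A) (row_mx B' A') ->
  forall (k : nat) (f : 'I_k -> 'I_d) (g : 'I_k -> 'I_n),
    {homo f : x y / (x < y)%N >-> (x < y)%N} ->
    {homo g : x y / (x < y)%N >-> (x < y)%N} ->
    \det (mxsub f g A) != 0 ->
    `|\det (mxsub f g A)| = `|\det (mxsub f g A')|.
Proof.
move=> /basic_diagE [beta -> beta_neq0] /basic_diagE [beta' -> beta'_neq0] _ _ sameX
  k f g /homo_ltn_inj f_inj /homo_ltn_inj g_inj detA_neq0.
have same_mult S m m' : is_mult (row_mx (diag_mx beta) A) S m ->
    is_mult (row_mx (diag_mx beta') A') S m' -> m = m'.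
  by move=> /(sameX S).2 multX; apply/has_index_unique/multX/in_lattice_sub.
have [r def_d] : exists r, d = (k + r)%N.
  by exists (d - k)%N; rewrite subnKC //; have := leq_card f f_inj; rewrite !card_ord.
subst d; have [t t_inj ft_neq] := ord_complement f_inj.
have eq_prod := same_mult _ _ _ (is_mult_diag_cols A beta_neq0 t_inj)
  (is_mult_diag_cols A' beta'_neq0 t_inj).
pose h := join_ord (fun a => rshift (k + r) (g a)) (fun b => lshift n (t b)).
have h_inj : injective h.
  apply: join_ord_inj => [a a' /rshift_inj /g_inj|b b' /lshift_inj /t_inj|a b] //.
  by rewrite eq_sym eq_lrshift.
have prod_gt0 : (0 < \prod_b `|(beta 0 (t b))%R|)%N.
  by apply: prodn_gt0 => b; rewrite absz_gt0.
have detX : \det (colsub h (row_mx (diag_mx beta) A)) != 0.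
  by rewrite -absz_eq0 (absz_det_basic _ _ _ f_inj) // muln_eq0 negb_or absz_eq0 detA_neq0 -lt0n.
have detX' : \det (colsub h (row_mx (diag_mx beta') A')) != 0.
  by rewrite -mat_rk_basis // -(sameX _).1 mat_rk_basis.
have := same_mult _ _ _ (is_mult_basis h_inj detX) (is_mult_basis h_inj detX').
rewrite !(absz_det_basic _ _ _ f_inj) // -eq_prod => /eqP; rewrite eqn_pmul2r // => /eqP eqA.
by rewrite -!abszE eqA.
Qed.
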